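(* Let $q$ be odd, $\varepsilon=\left(\frac{-1}{q}\right)$, $\nu=\left(\frac2q\right)$. For every $k\ge1$, $T_k(1)=1$, $T_k(-1)=(-1)^k$, and, viewing $T_k$ as a map ${\mathbb F}_q\to{\mathbb F}_q$: (i) $T_k(\mathcal A_1^{\nu,\nu})\subset\mathcal A_1^{\nu,\nu}\sqcup\{1,-\varepsilon\}$ and $T_k(\mathcal A_1^{-\nu,\nu})\subset\mathcal A_1^{-\nu,\nu}\sqcup\{1,\varepsilon\}$. (ii) If $k$ is odd then $T_k(\mathcal A_1^{\varepsilon\nu,-\nu})\subset\mathcal A_1^{\varepsilon\nu,-\nu}\sqcup\{-1\}$ and $T_k(\mathcal A_1^{-\varepsilon\nu,-\nu})\subset\mathcal A_1^{-\varepsilon\nu,-\nu}$. (iii) If $k$ is even then $T_k(\mathcal A_1^{-\nu,-\nu})\subset\mathcal A_1^{\nu,\nu}\sqcup\{1,-\varepsilon\}$ and $T_k(\mathcal A_1^{\nu,-\nu})\subset\mathcal A_1^{-\nu,\nu}\sqcup\{1,\varepsilon\}$. (iv) If $(q-1)/2$ divides $k$, then $T_k({\mathbb F}_q)\subset\mathcal A_1^{+-}\sqcup\mathcal A_1^{-+}\sqcup\{1,-1\}=\{a\in{\mathbb F}_q:a^2-1\text{ is a nonsquare}\}\sqcup\{1,-1\}$; if in addition $k$ is even, $T_k({\mathbb F}_q)\subset\mathcal A_1^{-\nu,\nu}\sqcup\{1,-1\}$. (v) If $(q+1)/2$ divides $k$, then $T_k({\mathbb F}_q)\subset\mathcal A_1^{++}\sqcup\mathcal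 A_1^{--}\sqcup\{1,-1\}=\{a\in{\mathbb F}_q:a^2-1\text{ is a square (possibly }0)\}$; if in addition $k$ is even, $T_k({\mathbb F}_q)\subset\mathcal A_1^{\nu,\nu}\sqcup\{1,-1\}$. (vi) If $\mathcal A_1^{\varepsilon_1,\varepsilon_2}$ is nonempty, then $T_k$ permutes $\mathcal A_1^{\varepsilon_1,\varepsilon_2}$ iff $\gcd(k,d^{\nu\varepsilon_1,\nu\varepsilon_2})=1$, where $d^{++}=(q-1)/2$, $d^{+-}=q+1$, $d^{-+}=(q+1)/2$, $d^{--}=q-1$.
   Context: Chebyshev polynomials of the first kind $T_k\in\mathbb Z[x]$: $T_0=1$, $T_1=x$, $T_{k+2}=2xT_{k+1}-T_k$. $\left(\frac{a}{q}\right)$ is the Legendre symbol on ${\mathbb F}_q$. For $\varepsilon_1,\varepsilon_2\in\{1,-1\}$ (written $+,-$) and $\lambda\in{\mathbb F}_q^\times$, $\mathcal A_\lambda^{\varepsilon_1,\varepsilon_2}=\{u\in{\mathbb F}_q:\left(\frac{u-\lambda}{q}\right)=\varepsilon_1,\ \left(\frac{u+\lambda}{q}\right)=\varepsilon_2\}$. *)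

From HB Require Import structures.
From mathcomp Require Import all_boot all_order all_algebra all_field.
Set Implicit Arguments. Unset Strict Implicit. Unset Printing Implicit Defensive.
Import Order.TTheory GRing.Theory Num.Theory.
Local Open Scope ring_scope.

(* Chebyshev polynomials of the first kind in Z[x]:
   T_0 = 1, T_1 = x, T_{k+2} = 2 x T_{k+1} - T_k.
   cheb_pair n = (T_n, T_{n+1}). *)
Fixpoint cheb_pair (n : nat) : {poly int} * {poly int} :=
  match n with
  | 0%N => (1, 'X)
  | n'.+1 => let: (a, b) := cheb_pair n' in (b, 'X * b *+ 2 - a)
  end.

Definition cheb (n : nat) : {poly int} := (cheb_pair n).1.

Definition chebF (F : finFieldType) (k : nat) (x : F) : F :=
  (map_poly (intr : int -> F) (cheb k)).[x].

(* a is a square in F (0 counts as a square) *)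
Definition is_square (F : finFieldType) (a : F) : bool := [exists b : F, b ^+ 2 == a].

Definition legendre (F : finFieldType) (a : F) : int :=
  if a == 0 then 0 else if is_square a then 1 else -1.

Definition Aset (F : finFieldType) (e1 e2 : int) (l : F) : {set F} :=
  [set u : F | (legendre (u - l) == e1) && (legendre (u + l) == e2)].

(* f maps A into A bijectively (A finite) *)
Definition permutes (F : finFieldType) (f : F -> F) (A : {set F}) : Prop :=
  {in A, forall x, f x \in A} /\ {in A &, injective f}.

Definition dsign (q : nat) (s1 s2 : int) : nat :=
  if s1 == 1 then (if s2 == 1 then (q.-1)./2 else q.+1)
  else (if s2 == 1 then (q.+1)./2 else q.-1).

From HB Require Import structures.
From mathcomp Require Import all_boot all_order all_algebra all_field all_fingroup all_solvable.
From mathcomp Require Import zify ring.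
Set Implicit Arguments. Unset Strict Implicit. Unset Printing Implicit Defensive.
Import Order.TTheory GRing.Theory Num.Theory FinRing.Theory.
Local Open Scope ring_scope.

(* Write t = (z + z^-1) / 2 with z in the quadratic extension E of F; then
   T_k(t) = (z^k + z^-k) / 2, and z lies either in F^* (z^(q-1) = 1) or in the
   norm-one torus (z^(q+1) = 1).  If y^2 = z then 2(t + 1) = (y + y^-1)^2 and the
   Frobenius multiplies y + y^-1 by z^m, m = (q -+ 1)/2, so by Euler's criterion
   the quadratic character of 2(t + 1) is z^m; applying this to -z gives the
   character of 2(t - 1).  Thus A_1^{e1,e2} is the image of the set of lifts in a
   fixed torus with z^m = nu e2, T_k acts on lifts as z |-> z^k, and every claim
   becomes a statement about power maps on the cyclic groups of order q -+ 1. *)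

Section FiniteField.
Variable K : finFieldType.

Lemma expf_card_pred (x : K) : x != 0 -> x ^+ #|K|.-1 = 1.
Proof.
move=> x0; apply: (mulfI x0); rewrite mulr1 -exprS.
by rewrite (ltn_predK (finNzRing_gt1 K)) expf_card.
Qed.

Lemma card_pred_gt0 : (0 < #|K|.-1)%N.
Proof. by rewrite -subn1 subn_gt0 finNzRing_gt1. Qed.

Lemma finField_generator :
  exists g : K, (forall x, x != 0 -> exists i, x = g ^+ i) /\
                (forall i, (g ^+ i == 1) = (#|K|.-1 %| i)%N).
Proof.
have /cyclicP [x defK] := field_unit_group_cyclic [set: {unit K}]%G.
exists (FinRing.uval x); split=> [y y0 | i].
  have : finField_unit y0 \in <[x]>%g by rewrite -defK inE.
  by case/cycleP=> i yE; exists i; rewrite -val_unitX -yE.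
rewrite -val_unitX -val_unit1 val_eqE -order_dvdn /order -defK.
by rewrite card_finField_unit.
Qed.

Lemma expf_eq1_exists_root (d m : nat) (x : K) :
  (d * m)%N = #|K|.-1 -> x != 0 -> x ^+ m = 1 -> exists y, x = y ^+ d.
Proof.
move=> dmE x0 xm1; have [g [gen_g ord_g]] := finField_generator.
have m_gt0 : (0 < m)%N.
  by move: (card_pred_gt0); rewrite -dmE muln_gt0 => /andP [].
have [i xE] := gen_g x x0; move: xm1; rewrite xE -exprM => /eqP.
rewrite ord_g -dmE dvdn_pmul2r // => /dvdnP [j ->].
by exists (g ^+ j); rewrite -exprM mulnC.
Qed.

Lemma exists_root_of_unity (r : nat) :
  (r %| #|K|.-1)%N -> (1 < r)%N -> exists2 w : K, w ^+ r = 1 & w != 1.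
Proof.
move=> r_dvd r_gt1; have [g [_ ord_g]] := finField_generator.
have n_gt0 := card_pred_gt0.
exists (g ^+ (#|K|.-1 %/ r)); first by apply/eqP; rewrite -exprM ord_g divnK.
have quot_gt0 : (0 < #|K|.-1 %/ r)%N.
  by rewrite divn_gt0 ?(ltnW r_gt1) ?(dvdn_leq n_gt0 r_dvd).
by rewrite ord_g; apply/negP => /(dvdn_leq quot_gt0); rewrite leqNgt ltn_Pdiv.
Qed.

Lemma two_neq0 : odd #|K| -> (2 : K) != 0.
Proof.
move=> oddK; apply: contraL oddK => /eqP two0.
have char2 : 2%N \in [pchar K] by rewrite inE /= two0 eqxx.
have : (2%N).-nat #|K|.
  by have := abelem_pgroup (fin_ring_pchar_abelem char2); rewrite /pgroup cardsT.
case/p_natP => [[|n] cardK]; last by rewrite cardK expnS oddM.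
by have := finNzRing_gt1 K; rewrite cardK.
Qed.

End FiniteField.

Lemma cheb_rec n : cheb n.+2 = 'X * cheb n.+1 *+ 2 - cheb n.
Proof. by rewrite /cheb /=; case: (cheb_pair n). Qed.

Lemma cheb_pm1 k : (cheb k).[1] = 1 /\ (cheb k).[-1] = (-1) ^+ k.
Proof.
suff chebP n : ((cheb n).[1] = 1 /\ (cheb n).[-1] = (-1) ^+ n) /\
               ((cheb n.+1).[1] = 1 /\ (cheb n.+1).[-1] = (-1) ^+ n.+1).
  by case: (chebP k).
elim: n => [|n [[c1 cN1] [c1' cN1']]]; first by rewrite /cheb /= !hornerE expr1.
split=> //; rewrite cheb_rec !hornerE c1 cN1 c1' cN1' !exprS; split; ring.
Qed.

Lemma mul2nI (R : idomainType) (x y : R) : (2 : R) != 0 -> x *+ 2 = y *+ 2 -> x = y.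
Proof. by move=> two0; rewrite -[x *+ 2]mulr_natr -[y *+ 2]mulr_natr => /(mulIf two0). Qed.

Lemma addfV_eq (E : fieldType) (x z : E) :
  x != 0 -> z != 0 -> x + x^-1 = z + z^-1 -> x = z \/ x = z^-1.
Proof.
move=> x0 z0 sumE.
have : (x - z) * (x - z^-1) = 0.
  have -> : (x - z) * (x - z^-1) = x * (x + x^-1 - (z + z^-1)) - x * x^-1 + z * z^-1 by ring.
  by rewrite sumE subrr mulr0 !mulfV // sub0r addNr.
by move/eqP; rewrite mulf_eq0 !subr_eq0 => /orP [] /eqP; [left | right].
Qed.

Lemma coprime_expr_inv (R : pzSemiRingType) (k d : nat) : (0 < k)%N -> coprime k d ->
  exists k' : nat, forall x : R, x ^+ d = 1 -> (x ^+ k) ^+ k' = x.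
Proof.
move=> k_gt0 /eqP kd1; have [k' n kE _] := egcdnP d k_gt0.
by exists k' => x xd; rewrite -exprM mulnC kE kd1 exprD mulnC exprM xd expr1n mul1r.
Qed.

Lemma sqr_expr_of_fibre (E : fieldType) (z w : E) (k : nat) : (-1 : E) != 1 ->
    z != 0 -> w ^+ k = 1 -> w != 1 ->
    (z * w = z \/ z * w = z^-1) -> (z * w ^+ 2 = z \/ z * w ^+ 2 = z^-1) ->
  (z ^+ k) ^+ 2 = 1.
Proof.
move=> N1 z0 wk w1 zwE zw2E.
have zw : z * w = z^-1.
  by case: zwE => // zw; case/eqP: w1; apply: (mulfI z0); rewrite zw mulr1.
have zw0 : z * w != 0 by rewrite zw invr_eq0.
have w2 : w ^+ 2 = 1.
  case: zw2E => zw2; first by apply: (mulfI z0); rewrite zw2 mulr1.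
  by case/eqP: w1; apply: (mulfI zw0); rewrite mulr1 -mulrA -expr2 zw2 zw.
have wN1 : w = -1 by move/eqP: w2; rewrite sqrf_eq1 (negbTE w1) => /eqP.
have z2 : z ^+ 2 = -1.
  have : z * (z * w) = 1 by rewrite zw mulfV.
  by rewrite wN1 mulrN1 mulrN -expr2 => /eqP; rewrite eqr_oppLR => /eqP.
have k_even : ~~ odd k.
  move: wk; rewrite wN1 -signr_odd; case: (odd k) => //.
  by rewrite expr1 => /eqP; rewrite (negbTE N1).
by rewrite -exprM mulnC exprM z2 -signr_odd (negbTE k_even).
Qed.

Section Joukowski.
Variables (F : finFieldType) (E : fieldType) (f : {rmorphism F -> E}).

Lemma chebF_rec k (x : F) : chebF k.+2 x = x * chebF k.+1 x *+ 2 - chebF k x.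
Proof. by rewrite /chebF cheb_rec rmorphB rmorphMn rmorphM /= map_polyX !hornerE. Qed.

Definition is_joukowski (t : F) (z : E) := z != 0 /\ f t *+ 2 = z + z^-1.

Lemma chebF_joukowski k t z :
  is_joukowski t z -> is_joukowski (chebF k t) (z ^+ k).
Proof.
move=> [z0 tE]; suff jP n : is_joukowski (chebF n t) (z ^+ n) /\
                           is_joukowski (chebF n.+1 t) (z ^+ n.+1) by case: (jP k).
have zV : z * z^-1 = 1 by rewrite mulfV.
elim: n => [|n [[_ tnE] [zn0 tn1E]]].
  split; split; rewrite ?expr0 ?expr1 ?oner_neq0 //.
    by rewrite /chebF /= rmorph1 hornerC rmorph1 invr1.
  by rewrite /chebF /= map_polyX hornerX.
split; first by split.
split; first by rewrite expf_neq0.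
rewrite chebF_rec rmorphB rmorphMn rmorphM -!exprVn.
have -> : (f t * f (chebF n.+1 t) *+ 2 - f (chebF n t)) *+ 2 =
          (f t *+ 2) * (f (chebF n.+1 t) *+ 2) - f (chebF n t) *+ 2 by ring.
rewrite tE tn1E tnE -!exprVn.
have -> : (z + z^-1) * (z ^+ n.+1 + z^-1 ^+ n.+1) =
          z ^+ n.+2 + z^-1 ^+ n.+2 + z * z^-1 * (z ^+ n + z^-1 ^+ n) by rewrite !exprS; ring.
by rewrite zV mul1r addrK.
Qed.

Lemma joukowskiV t z : is_joukowski t z -> is_joukowski t z^-1.
Proof. by case=> z0 tE; split; rewrite ?invr_eq0 // invrK addrC. Qed.

Lemma joukowski_eq t z x : is_joukowski t z -> is_joukowski t x -> x = z \/ x = z^-1.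
Proof. by case=> z0 tE [x0 tE']; apply: addfV_eq; rewrite -?tE -?tE'. Qed.

End Joukowski.

Section OddField.
Variable F : finFieldType.
Hypothesis oddF : odd #|F|.

Local Notation q := #|F|.
Local Notation h := (#|F|./2).
Local Notation nu := ((2 : F) ^+ h).
Local Notation eps := ((-1 : F) ^+ h).

Lemma card_half : q = h.*2.+1.
Proof. by rewrite -{1}(odd_double_half q) oddF. Qed.

Lemma card_predE : q.-1 = h.*2. Proof. by rewrite {1}card_half. Qed.
Lemma card_succE : q.+1 = h.+1.*2. Proof. by rewrite {1}card_half. Qed.

Lemma half_gt0 : (0 < h)%N.
Proof. by have := finNzRing_gt1 F; rewrite card_half; case: (h). Qed.

Let two_neq0F : (2 : F) != 0 := two_neq0 oddF.

Lemma oppr1_neq1 : (-1 : F) != 1.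
Proof. by rewrite -subr_eq0 -opprD oppr_eq0. Qed.

Lemma expr_half_sqr (x : F) : x != 0 -> (x ^+ h) ^+ 2 = 1.
Proof. by move=> x0; rewrite -exprM muln2 -card_predE expf_card_pred. Qed.

Lemma sqr_sign (a : F) : a ^+ 2 = 1 -> a = 1 \/ a = -1.
Proof. by move/eqP; rewrite sqrf_eq1 => /orP [] /eqP; [left | right]. Qed.

Lemma sign_neq0 (a : F) : a ^+ 2 = 1 -> a != 0.
Proof. by apply: contra_eq_neq => ->; rewrite expr0n eq_sym oner_eq0. Qed.

Lemma is_squareE (x : F) : x != 0 -> is_square x = (x ^+ h == 1).
Proof.
move=> x0; apply/existsP/eqP => [[y /eqP yx] | xh1].
  have y0 : y != 0 by apply: contraNneq x0 => y0; rewrite -yx y0 expr0n.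
  by rewrite -yx -exprM mulnC exprM expr_half_sqr.
have dmE : (2 * h)%N = q.-1 by rewrite card_predE mul2n.
by have [y ->] := expf_eq1_exists_root dmE x0 xh1; exists y.
Qed.

Lemma expr_half0 : (0 : F) ^+ h = 0.
Proof. by rewrite expr0n gtn_eqF ?half_gt0. Qed.

Lemma legendreE (x : F) : (legendre x)%:~R = x ^+ h.
Proof.
rewrite /legendre; have [->|x0] := eqVneq x 0; first by rewrite expr_half0.
rewrite is_squareE //; have [->|->] := sqr_sign (expr_half_sqr x0); first by rewrite eqxx.
by rewrite (negbTE oppr1_neq1).
Qed.

Lemma legendre_eq_sign (x : F) (e : int) : e ^+ 2 = 1 ->
  (legendre x == e) = (x ^+ h == e%:~R).
Proof.
have n1 := oppr1_neq1; have n0 : (-1 : F) != 0 by rewrite oppr_eq0 oner_neq0.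
rewrite -legendreE /legendre => /eqP; rewrite sqrf_eq1 => /orP [] /eqP ->;
  do 2?case: ifP => _; rewrite /= ?rmorphN ?rmorph1 ?rmorph0 ?eqxx //.
all: by rewrite ?(eq_sym (0 : F)) ?oner_eq0 ?(negbTE n0) ?(eq_sym (1 : F)) ?(negbTE n1).
Qed.

Lemma nu_sqr : nu ^+ 2 = 1. Proof. exact: expr_half_sqr two_neq0F. Qed.

Lemma eps_sqr : eps ^+ 2 = 1.
Proof. by rewrite expr_half_sqr // oppr_eq0 oner_eq0. Qed.

Lemma legendre_sqr (x : F) : x != 0 -> legendre x ^+ 2 = 1.
Proof. by move=> x0; rewrite /legendre (negbTE x0); case: ifP. Qed.

Lemma exists_nonsquare : exists x : F, ~~ is_square x.
Proof.
have [g [gen_g ord_g]] := finField_generator F.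
have g0 : g != 0.
  apply: contraTneq (dvdnn q.-1) => g0.
  by rewrite -ord_g g0 expr0n gtn_eqF ?card_pred_gt0 // eq_sym oner_eq0.
exists g; rewrite is_squareE // ord_g card_predE -muln2.
by apply/negP => /(dvdn_leq half_gt0); rewrite -[leqRHS]muln1 leq_pmul2l ?half_gt0.
Qed.

Lemma oppr_neq_self (x : F) : x != 0 -> - x != x.
Proof.
move=> x0; rewrite -subr_eq0 -opprD oppr_eq0 -mulr2n -mulr_natr.
by rewrite mulf_neq0.
Qed.

Lemma sign_neq (a b : F) : a ^+ 2 = 1 -> b ^+ 2 = 1 -> a != b -> a = - b.
Proof.
by move=> /sqr_sign [] -> /sqr_sign [] ->; rewrite ?eqxx ?opprK.
Qed.

(* A_1^{a,b}, with the Legendre symbols computed as signs in F by Euler's criterion. *)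
Definition char_class (a b : F) : {set F} :=
  [set u | ((u - 1) ^+ h == a) && ((u + 1) ^+ h == b)].

Lemma Aset_char_class (e1 e2 : int) : e1 ^+ 2 = 1 -> e2 ^+ 2 = 1 ->
  Aset e1 e2 (1 : F) = char_class e1%:~R e2%:~R.
Proof. by move=> e1s e2s; apply/setP => u; rewrite !inE !legendre_eq_sign. Qed.

Lemma char_class_neq_pm1 (a b u : F) : a != 0 -> b != 0 -> u \in char_class a b ->
  u != 1 /\ u != -1.
Proof.
move=> a0 b0; rewrite inE => /andP [/eqP uaE /eqP ubE]; split.
  by apply: contra_eq_neq uaE => ->; rewrite subrr expr_half0 eq_sym.
by apply: contra_eq_neq ubE => ->; rewrite addNr expr_half0 eq_sym.
Qed.

Lemma is_square0 : is_square (0 : F).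
Proof. by apply/existsP; exists 0; rewrite expr0n. Qed.

Lemma is_square_sqr_sub1 (u : F) : u != 1 -> u != -1 ->
  is_square (u ^+ 2 - 1) = ((u - 1) ^+ h == (u + 1) ^+ h).
Proof.
move=> u1 uN1; have um0 : u - 1 != 0 by rewrite subr_eq0.
have up0 : u + 1 != 0 by rewrite -[1]opprK subr_eq0.
rewrite subr_sqr_1 is_squareE ?mulf_neq0 // exprMn.
by have [->|->] := sqr_sign (expr_half_sqr up0); rewrite ?mulr1 // mulrN1 eqr_oppLR.
Qed.

Lemma char_class_nonsquare :
  char_class 1 (-1) :|: char_class (-1) 1 = [set u | ~~ is_square (u ^+ 2 - 1)].
Proof.
have n1 := oppr1_neq1; have n1' : (1 : F) != -1 by rewrite eq_sym.
have n01 : ((0 : F) == 1) = false by rewrite eq_sym oner_eq0.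
have n0N1 : ((0 : F) == -1) = false by rewrite eq_sym oppr_eq0 oner_eq0.
apply/setP => u; rewrite !inE.
have [->|u1] := eqVneq u 1.
  by rewrite subrr expr_half0 expr1n subrr is_square0 n01 n0N1.
have [->|uN1] := eqVneq u (-1).
  by rewrite addNr expr_half0 sqrrN expr1n subrr is_square0 n01 n0N1 !andbF.
have um0 : u - 1 != 0 by rewrite subr_eq0.
have up0 : u + 1 != 0 by rewrite -[1]opprK subr_eq0.
rewrite is_square_sqr_sub1 //.
by have [->|->] := sqr_sign (expr_half_sqr um0); have [->|->] := sqr_sign (expr_half_sqr up0);
  rewrite ?eqxx ?(negbTE n1) ?(negbTE n1').
Qed.

Lemma char_class_square :
  char_class 1 1 :|: char_class (-1) (-1) :|: [set 1; -1] = [set u | is_square (u ^+ 2 - 1)].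
Proof.
have n1 := oppr1_neq1; have n1' : (1 : F) != -1 by rewrite eq_sym.
apply/setP => u; rewrite !inE.
have [->|u1] := eqVneq u 1; first by rewrite expr1n subrr is_square0 !orbT.
have [->|uN1] := eqVneq u (-1); first by rewrite sqrrN expr1n subrr is_square0 !orbT.
have um0 : u - 1 != 0 by rewrite subr_eq0.
have up0 : u + 1 != 0 by rewrite -[1]opprK subr_eq0.
rewrite is_square_sqr_sub1 // !orbF.
by have [->|->] := sqr_sign (expr_half_sqr um0); have [->|->] := sqr_sign (expr_half_sqr up0);
  rewrite ?eqxx ?(negbTE n1) ?(negbTE n1').
Qed.

Lemma quadratic_extension :
  exists (E : finFieldType) (f : {rmorphism F -> E}), #|E| = (q ^ 2)%N.
Proof.
have [d d_nsq] := exists_nonsquare.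
pose p : {poly F} := 'X^2 - d%:P.
have size_p : size p = 3%N by rewrite size_XnsubC.
have p_irr : monic_irreducible_poly p.
  split; last exact: monicXnsubC.
  apply: cubic_irreducible; first by rewrite size_p.
  move=> x; apply: contra d_nsq; rewrite /root /p !hornerE subr_eq0 => /eqP dE.
  by apply/existsP; exists x; rewrite dE.
exists {poly %/ p with p_irr}, (in_alg {poly %/ p with p_irr}).
by rewrite card_qfpoly size_p.
Qed.

Section OddJoukowski.
Variables (E : fieldType) (f : {rmorphism F -> E}).

Lemma joukowskiN t z : is_joukowski f t z -> is_joukowski f (- t) (- z).
Proof. by case=> z0 tE; split; rewrite ?oppr_eq0 // rmorphN mulNrn tE invrN opprD. Qed.

Lemma joukowski_inj t t' z : is_joukowski f t z -> is_joukowski f t' z -> t = t'.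
Proof.
case=> _ tE [_ tE']; apply: (mul2nI two_neq0F); apply: (fmorph_inj f).
by rewrite !rmorphMn tE tE'.
Qed.

Lemma joukowski_sqr1 t z : is_joukowski f t z -> z ^+ 2 = 1 -> f t = z.
Proof.
case=> z0 tE z2; have zV : z^-1 = z by apply: (mulfI z0); rewrite mulfV // -expr2 z2.
have two0 : (2 : E) != 0 by rewrite -(rmorph_nat f) fmorph_eq0 two_neq0F.
by apply: (mul2nI two0); rewrite tE zV mulr2n.
Qed.

Lemma joukowski_pm1 t z : is_joukowski f t z -> z ^+ 2 = 1 -> t = 1 \/ t = -1.
Proof.
move=> jz /[dup] /eqP; rewrite sqrf_eq1 => /orP [] /eqP zE /(joukowski_sqr1 jz);
  rewrite zE -?(rmorph1 f) -?rmorphN => /fmorph_inj; by [left | right].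
Qed.

Lemma joukowski_neq_pm1 t z : is_joukowski f t z -> z ^+ 2 != 1 -> t != 1 /\ t != -1.
Proof.
move=> jz z2; have j1 : is_joukowski f 1 1 by split; rewrite ?oner_neq0 // rmorph1 invr1.
have sqr1 x y : y ^+ 2 = 1 -> x = y \/ x = y^-1 -> x ^+ 2 = 1.
  by move=> y2 [] ->; rewrite ?exprVn y2 ?invr1.
split; apply: contra_neq z2 => tE; move: jz; rewrite tE => jz.
  by apply: sqr1 (joukowski_eq j1 jz); rewrite expr1n.
by apply: sqr1 (joukowski_eq (joukowskiN j1) jz); rewrite sqrrN expr1n.
Qed.

End OddJoukowski.

(* A lift z satisfies z ^+ (half_order true).*2 = 1 iff z lies in F^*, and
   z ^+ (half_order false).*2 = 1 iff z has norm one. *)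
Definition half_order (split : bool) : nat := if split then h else h.+1.

Lemma half_order_double split : (half_order split).*2 = if split then q.-1 else q.+1.
Proof. by rewrite card_predE card_succE; case: split. Qed.

Lemma signr_half_order (R : pzRingType) split :
  (-1 : R) ^+ (h + half_order split) = if split then 1 else -1.
Proof. by rewrite -signr_odd /half_order; case: split; rewrite ?addnS addnn /= ?odd_double. Qed.

(* The modulus d^{nu a, nu b} of the paper. *)
Definition class_period (a b : F) : nat :=
  if b * nu == 1 then half_order (a == b) else (half_order (a == b)).*2.

Section QuadraticExtension.
Variables (E : finFieldType) (f : {rmorphism F -> E}).
Hypothesis cardE : #|E| = (q ^ 2)%N.

Lemma card_ext_pred : #|E|.-1 = (h.*2 * h.+1.*2)%N.
Proof. by rewrite cardE card_half -subn1 -!mul2n expnS expn1; nia. Qed.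

Lemma frobeniusD (x y : E) : (x + y) ^+ q = x ^+ q + y ^+ q.
Proof.
have [p p_pr charFp] := finPcharP F; apply: exprDn_pchar.
rewrite (eq_pnat _ (pcharf_eq (rmorph_pchar f charFp))).
by have := abelem_pgroup (fin_ring_pchar_abelem charFp); rewrite /pgroup cardsT.
Qed.

Lemma frobenius_fixed (x : E) : x ^+ q = x -> exists a, x = f a.
Proof.
move=> xq; have := congr1 (fun p => (map_poly f p).[x]) (finField_genPoly F).
rewrite /= rmorphB rmorphXn /= map_polyX !hornerE xq subrr rmorph_prod horner_prod.
move/esym/eqP/prodf_eq0 => [a _].
by rewrite /= map_polyXsubC hornerXsubC subr_eq0 => /eqP ->; exists a.
Qed.

Lemma torus_frobenius (x : E) split :
  x ^+ (half_order split).*2 = 1 -> x ^+ q = if split then x else x^-1.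
Proof.
rewrite half_order_double; case: split => xE.
  by rewrite -(prednK (ltnW (finNzRing_gt1 F))) exprS xE mulr1.
have x0 : x != 0 by apply: contra_eq_neq xE => ->; rewrite exprS mul0r eq_sym oner_eq0.
by apply: (mulIf x0); rewrite -exprSr xE mulVf.
Qed.

Lemma joukowski_torus t z : is_joukowski f t z -> exists split, z ^+ (half_order split).*2 = 1.
Proof.
case=> z0 tE; have q_gt0 : (0 < q)%N := ltnW (finNzRing_gt1 F).
have fixed : z ^+ q + (z ^+ q)^-1 = z + z^-1.
  by rewrite -exprVn -frobeniusD -tE -rmorphMn -rmorphXn expf_card.
have [zq|zq] := addfV_eq (expf_neq0 q z0) z0 fixed.
  exists true; rewrite half_order_double.
  by apply: (mulIf z0); rewrite mul1r -exprSr prednK.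
by exists false; rewrite half_order_double exprSr zq mulVf.
Qed.

Lemma half_order_uniq (z : E) split split' : z ^+ 2 != 1 ->
  z ^+ (half_order split).*2 = 1 -> z ^+ (half_order split').*2 = 1 -> split = split'.
Proof.
move=> z2; wlog [-> ->] : split split' / split = true /\ split' = false.
  by case: split split' => [] [] // hw zE zE'; [apply: hw zE zE' | symmetry; apply: hw zE' zE].
by rewrite /half_order doubleS !exprS mulrA -expr2 => -> /eqP; rewrite mulr1 (negbTE z2).
Qed.

Lemma ext_square (x : E) : x ^+ (h.*2 * h.+1) = 1 -> exists y, x = y ^+ 2.
Proof.
move=> xE; have n_gt0 : (0 < h.*2 * h.+1)%N by rewrite muln_gt0 double_gt0 half_gt0.
have x0 : x != 0 by apply: contra_eq_neq xE => ->; rewrite expr0n gtn_eqF // eq_sym oner_eq0.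
have dmE : (2 * (h.*2 * h.+1))%N = #|E|.-1 by rewrite card_ext_pred -!mul2n; lia.
by have [y ->] := expf_eq1_exists_root dmE x0 xE; exists y.
Qed.

Lemma f_square (a : F) : exists r, r ^+ 2 = f a.
Proof.
have [->|a0] := eqVneq a 0; first by exists 0; rewrite rmorph0 expr0n.
have [|y ->] := @ext_square (f a); last by exists y.
by rewrite exprM -rmorphXn -card_predE expf_card_pred // rmorph1 expr1n.
Qed.

Lemma torus_square (z : E) split : z ^+ (half_order split).*2 = 1 -> exists y, z = y ^+ 2.
Proof.
move=> zE; apply: ext_square.
case: split zE => /= zE; first by rewrite exprM zE expr1n.
by rewrite -doubleMl doubleMr mulnC exprM zE expr1n.
Qed.

Lemma joukowski_exists t : exists z, is_joukowski f t z.
Proof.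
have [r rE] := f_square (t ^+ 2 - 1).
have prodE : (f t + r) * (f t - r) = 1.
  by rewrite mulrC -subr_sqr rE rmorphB rmorphXn rmorph1 opprB addrC subrK.
have z0 : f t + r != 0 by apply: contra_eq_neq prodE => ->; rewrite mul0r eq_sym oner_eq0.
have zV : (f t + r)^-1 = f t - r by apply: (mulfI z0); rewrite mulfV.
by exists (f t + r); split=> //; rewrite zV addrACA subrr addr0 mulr2n.
Qed.

Lemma sqrt_halfsum_frobenius (y : E) split : y != 0 ->
  (y ^+ 2) ^+ (half_order split).*2 = 1 ->
  (y + y^-1) ^+ q = (y ^+ 2) ^+ half_order split * (y + y^-1).
Proof.
move=> y0 zE.
have yq : y ^+ q = (y ^+ 2) ^+ half_order split * (if split then y else y^-1).
  rewrite /half_order; case: split zE => zE.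
    by rewrite {1}card_half exprS -mul2n exprM mulrC.
  by apply: (mulIf y0); rewrite -exprSr card_succE -mul2n exprM mulfVK.
set c := (y ^+ 2) ^+ half_order split in zE yq *.
have c2 : c * c = 1 by rewrite -expr2 -exprM muln2.
have c0 : c != 0 by apply: contra_eq_neq c2 => ->; rewrite mul0r eq_sym oner_eq0.
have cV : c^-1 = c by rewrite -[c^-1]mul1r -c2 mulfK.
rewrite frobeniusD exprVn yq invfM cV mulrDr.
by case: (split); rewrite ?invrK // addrC.
Qed.

Lemma joukowski_half_power t z split : is_joukowski f t z ->
  z ^+ (half_order split).*2 = 1 -> t != -1 -> f ((t + 1) ^+ h * nu) = z ^+ half_order split.
Proof.
move=> [z0 tE] zE tN1; have [y zy] := torus_square zE.
have y0 : y != 0 by apply: contraNneq z0 => y0; rewrite zy y0 exprS mul0r.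
set v := y + y^-1.
have vE : v ^+ 2 = f ((t + 1) *+ 2).
  rewrite rmorphMn rmorphD rmorph1 mulrnDl tE zy.
  have -> : v ^+ 2 = y ^+ 2 + y^-1 ^+ 2 + (y * y^-1) *+ 2 by rewrite /v; ring.
  by rewrite mulfV // exprVn.
have tp0 : (t + 1) *+ 2 != 0 by rewrite -mulr_natr mulf_neq0 ?two_neq0F // addr_eq0.
have v0 : v != 0.
  by apply: contra_neq tp0 => v0; apply: (fmorph_inj f); rewrite -vE v0 exprS mul0r rmorph0.
have vq : v ^+ q = z ^+ half_order split * v.
  by rewrite zy; apply: sqrt_halfsum_frobenius; rewrite -?zy.
rewrite -exprMn mulr_natr rmorphXn -vE -exprM mul2n -card_predE.
by apply: (mulIf v0); rewrite -exprSr prednK ?vq // ltnW ?finNzRing_gt1.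
Qed.

Lemma joukowski_char t z split : is_joukowski f t z -> z ^+ 2 != 1 ->
    z ^+ (half_order split).*2 = 1 ->
  f ((t + 1) ^+ h * nu) = z ^+ half_order split /\
  (t - 1) ^+ h = (if split then 1 else -1) * (t + 1) ^+ h.
Proof.
move=> jz z2 zE; have [t1 tN1] := joukowski_neq_pm1 jz z2.
have fE := joukowski_half_power jz zE tN1.
split=> //; have nu0 : nu != 0 by rewrite expf_neq0 ?two_neq0F.
have zE' : (- z) ^+ (half_order split).*2 = 1 by rewrite -mul2n exprM sqrrN -exprM mul2n.
have tN : - t != -1 by rewrite eqr_opp.
have negE : (- t + 1) ^+ h * nu = (-1) ^+ half_order split * ((t + 1) ^+ h * nu).
  apply: (fmorph_inj f); rewrite (joukowski_half_power (joukowskiN jz) zE' tN).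
  by rewrite (exprNn z) rmorphM rmorphXn rmorphN rmorph1 fE.
apply: (mulIf nu0); have -> : t - 1 = - (- t + 1) by rewrite opprD opprK.
by rewrite exprNn -mulrA negE mulrA -exprD signr_half_order mulrA.
Qed.

Lemma char_class_joukowski a b u z : a ^+ 2 = 1 -> b ^+ 2 = 1 ->
    is_joukowski f u z -> z ^+ 2 != 1 ->
  (u \in char_class a b) = (z ^+ half_order (a == b) == f (b * nu)).
Proof.
move=> a2 b2 jz z2; have [split zE] := joukowski_torus jz.
have [fE cE] := joukowski_char jz z2 zE.
rewrite inE cE; apply/idP/eqP => [/andP [/eqP aE /eqP bE] | zbE].
  suff -> : (a == b) = split by rewrite -fE bE.
  rewrite -aE -bE; case: (split); rewrite ?mul1r ?eqxx // mulN1r.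
  by rewrite (negbTE (oppr_neq_self _)) // bE sign_neq0.
have splitE : (a == b) = split.
  apply: half_order_uniq z2 _ zE.
  by rewrite -muln2 exprM zbE -rmorphXn exprMn nu_sqr b2 mulr1 rmorph1.
have bE : (u + 1) ^+ h = b.
  apply: (mulIf (sign_neq0 nu_sqr)); apply: (fmorph_inj f).
  by rewrite fE -splitE zbE.
rewrite bE eqxx andbT -splitE; have [->|ab] := eqVneq a b; first by rewrite mul1r.
by rewrite mulN1r (sign_neq a2 b2 ab).
Qed.

Lemma char_class_lift a b u z : a ^+ 2 = 1 -> b ^+ 2 = 1 ->
    u \in char_class a b -> is_joukowski f u z ->
  z ^+ 2 != 1 /\ z ^+ half_order (a == b) = f (b * nu).
Proof.
move=> a2 b2 uA jz; have [u1 uN1] := char_class_neq_pm1 (sign_neq0 a2) (sign_neq0 b2) uA.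
have z2 : z ^+ 2 != 1.
  by apply/negP => /eqP /(joukowski_pm1 jz) [] uE; rewrite uE eqxx in u1 uN1.
by split=> //; apply/eqP; rewrite -(char_class_joukowski a2 b2 jz z2).
Qed.

Lemma chebF_char_class a b a' b' k u :
    a ^+ 2 = 1 -> b ^+ 2 = 1 -> a' ^+ 2 = 1 -> b' ^+ 2 = 1 ->
    (a' == b') = (a == b) -> b' * nu = (b * nu) ^+ k -> u \in char_class a b ->
  [\/ chebF k u \in char_class a' b',
      chebF k u = 1 /\ b' * nu = 1
    | chebF k u = -1 /\ b' * nu = (-1) ^+ half_order (a == b)].
Proof.
move=> a2 b2 a'2 b'2 classE b'E uA; have [z jz] := joukowski_exists u.
have [z2 zE] := char_class_lift a2 b2 uA jz.
have jZ := chebF_joukowski k jz.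
have ZE : (z ^+ k) ^+ half_order (a == b) = f (b' * nu).
  by rewrite -exprM mulnC exprM zE -rmorphXn b'E.
have [Z2|Z2] := eqVneq ((z ^+ k) ^+ 2) 1; last first.
  by apply: Or31; rewrite (char_class_joukowski a'2 b'2 jZ Z2) classE ZE.
move: ZE; rewrite -(joukowski_sqr1 jZ Z2) -rmorphXn => /fmorph_inj b'nu.
by have [TE|TE] := joukowski_pm1 jZ Z2; [apply: Or32 | apply: Or33];
  rewrite TE in b'nu *; rewrite -b'nu ?expr1n.
Qed.

Lemma joukowski_char_class t z split : is_joukowski f t z -> z ^+ 2 != 1 ->
    z ^+ (half_order split).*2 = 1 ->
  exists2 b, b ^+ 2 = 1 &
    t \in char_class ((if split then 1 else -1) * b) b /\ f (b * nu) = z ^+ half_order split.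
Proof.
move=> jz z2 zE; have [fE cE] := joukowski_char jz z2 zE.
have [_ tN1] := joukowski_neq_pm1 jz z2.
exists ((t + 1) ^+ h); first by rewrite expr_half_sqr // addr_eq0.
by rewrite inE cE !eqxx.
Qed.

Lemma class_period_expr a b z : b ^+ 2 = 1 ->
  z ^+ half_order (a == b) = f (b * nu) -> z ^+ class_period a b = 1.
Proof.
move=> b2 zE; rewrite /class_period; case: eqP => [bnu1|_]; first by rewrite zE bnu1 rmorph1.
by rewrite -muln2 exprM zE -rmorphXn exprMn b2 nu_sqr mulr1 rmorph1.
Qed.

Lemma class_of_torus a b x : a ^+ 2 = 1 -> b ^+ 2 = 1 -> x ^+ 2 != 1 ->
  x ^+ half_order (a == b) = f (b * nu) -> exists2 u, u \in char_class a b & is_joukowski f u x.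
Proof.
move=> a2 b2 x2 xE.
have xE2 : x ^+ (half_order (a == b)).*2 = 1.
  by rewrite -muln2 exprM xE -rmorphXn exprMn b2 nu_sqr mulr1 rmorph1.
have x0 : x != 0 by apply: contra_eq_neq xE2 => ->; rewrite expr0n double_eq0 /half_order;
  case: (a == b); rewrite ?gtn_eqF ?half_gt0 // eq_sym oner_eq0.
have /frobenius_fixed [c cE] : (x + x^-1) ^+ q = x + x^-1.
  by rewrite frobeniusD exprVn (torus_frobenius xE2); case: (a == b); rewrite ?invrK // addrC.
have ju : is_joukowski f (c / 2) x.
  by split=> //; rewrite -rmorphMn -[_ *+ 2]mulr_natr mulfVK ?two_neq0F.
by exists (c / 2); rewrite // (char_class_joukowski a2 b2 ju x2) xE.
Qed.

Section Coprime.
Variables (a b : F) (k : nat).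
Hypotheses (a2 : a ^+ 2 = 1) (b2 : b ^+ 2 = 1) (k_gt0 : (0 < k)%N).
Hypothesis k_coprime : coprime k (class_period a b).

Let k_inv : exists k' : nat, forall x : E, x ^+ class_period a b = 1 -> (x ^+ k) ^+ k' = x.
Proof. exact: coprime_expr_inv. Qed.

Let sign_expr : (b * nu) ^+ k = b * nu.
Proof.
have /sqr_sign [bnu|bnu] : (b * nu) ^+ 2 = 1 by rewrite exprMn b2 nu_sqr mulr1.
  by rewrite bnu expr1n.
rewrite bnu -signr_odd; case: (boolP (odd k)) => // k_even; move: k_coprime.
by rewrite /class_period bnu (negbTE oppr1_neq1) -muln2 coprimeMr coprimen2 (negbTE k_even) andbF.
Qed.

Lemma chebF_char_class_coprime u :
  u \in char_class a b -> chebF k u \in char_class a b.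
Proof.
move=> uA; have [z jz] := joukowski_exists u; have [z2 zE] := char_class_lift a2 b2 uA jz.
have [k' k'K] := k_inv.
have Z2 : (z ^+ k) ^+ 2 != 1.
  apply: contra_neq z2 => Z2; rewrite -(k'K z (class_period_expr b2 zE)).
  by rewrite -!exprM mulnAC !exprM Z2 expr1n.
rewrite (char_class_joukowski a2 b2 (chebF_joukowski k jz) Z2).
by rewrite -exprM mulnC exprM zE -rmorphXn sign_expr.
Qed.

Lemma chebF_inj_coprime : {in char_class a b &, injective (chebF k)}.
Proof.
move=> u1 u2 u1A u2A Tu12.
have [z1 jz1] := joukowski_exists u1; have [z2 jz2] := joukowski_exists u2.
have [_ z1E] := char_class_lift a2 b2 u1A jz1; have [_ z2E] := char_class_lift a2 b2 u2A jz2.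
have [k' k'K] := k_inv.
have z1d := class_period_expr b2 z1E; have z2d := class_period_expr b2 z2E.
have z1Vd : z1^-1 ^+ class_period a b = 1 by rewrite exprVn z1d invr1.
have jZ2 := chebF_joukowski k jz2; rewrite -Tu12 in jZ2.
have [Z21|Z21] := joukowski_eq (chebF_joukowski k jz1) jZ2.
  apply: joukowski_inj jz1 _; suff -> : z1 = z2 by [].
  by rewrite -(k'K z1 z1d) -(k'K z2 z2d) Z21.
apply: joukowski_inj (joukowskiV jz1) _; suff -> : z1^-1 = z2 by [].
by rewrite -(k'K _ z1Vd) -(k'K z2 z2d) Z21 exprVn.
Qed.

End Coprime.

Let oppr1_neq1E : (-1 : E) != 1.
Proof. by rewrite -(rmorph1 f) -rmorphN (inj_eq (fmorph_inj f)) oppr1_neq1. Qed.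

Lemma chebF_fibre a b k u0 z x : a ^+ 2 = 1 -> b ^+ 2 = 1 ->
    {in char_class a b &, injective (chebF k)} ->
    u0 \in char_class a b -> is_joukowski f u0 z ->
    x ^+ 2 != 1 -> x ^+ half_order (a == b) = f (b * nu) -> x ^+ k = z ^+ k ->
  x = z \/ x = z^-1.
Proof.
move=> a2 b2 Tinj u0A jz x2 xE xzk.
have [u uA jx] := class_of_torus a2 b2 x2 xE.
have Tu : chebF k u = chebF k u0.
  by apply: joukowski_inj (chebF_joukowski k jx) _; rewrite xzk; apply: chebF_joukowski.
by move: jx; rewrite (Tinj _ _ uA u0A Tu) => /(joukowski_eq jz).
Qed.

Lemma class_period_common_prime a b k : b ^+ 2 = 1 -> (b * nu) ^+ k = b * nu ->
    ~~ coprime k (class_period a b) ->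
  exists2 r, prime r & (r %| k)%N && (r %| half_order (a == b))%N.
Proof.
move=> b2 bnuk ncop.
have m_gt0 : (0 < half_order (a == b))%N by rewrite /half_order; case: (a == b); rewrite ?half_gt0.
have d_gt0 : (0 < class_period a b)%N.
  by rewrite /class_period; case: ifP; rewrite ?double_gt0.
have g_gt1 : (1 < gcdn k (class_period a b))%N.
  by rewrite ltn_neqAle eq_sym ncop gcdn_gt0 d_gt0 orbT.
set r := pdiv (gcdn k (class_period a b)); have r_pr : prime r := pdiv_prime g_gt1.
have rk : (r %| k)%N := dvdn_trans (pdiv_dvd _) (dvdn_gcdl _ _).
have rd : (r %| class_period a b)%N := dvdn_trans (pdiv_dvd _) (dvdn_gcdr _ _).
exists r; rewrite // rk /=; move: rd; rewrite /class_period; case: ifP => // bnu.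
have k_odd : odd k.
  have /sqr_sign [bnu1|bnuN1] : (b * nu) ^+ 2 = 1 by rewrite exprMn b2 nu_sqr mulr1.
    by rewrite bnu1 eqxx in bnu.
  move: bnuk; rewrite bnuN1 -signr_odd; case: (odd k) => // /eqP.
  by rewrite eq_sym (negbTE oppr1_neq1).
have r_odd : odd r by apply: contraTT k_odd; rewrite -!dvdn2 => /dvdn_trans; apply.
by rewrite -muln2 Gauss_dvdl // coprimen2.
Qed.

(* A prime r dividing gcd(k, d) gives an r-th root of unity w != 1 such that z w
   and z w^2 are lifts in the class with the same k-th power as z. *)
Lemma coprime_of_chebF_permutes a b k : a ^+ 2 = 1 -> b ^+ 2 = 1 ->
    char_class a b != set0 -> permutes (chebF k) (char_class a b) ->
  coprime k (class_period a b).
Proof.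
move=> a2 b2 /set0Pn [u0 u0A] [Tmaps Tinj]; set m := half_order (a == b).
have [z jz] := joukowski_exists u0; have [_ zE] := char_class_lift a2 b2 u0A jz.
have [Z2 ZE] := char_class_lift a2 b2 (Tmaps u0 u0A) (chebF_joukowski k jz).
have bnuk : (b * nu) ^+ k = b * nu.
  by apply: (fmorph_inj f); rewrite rmorphXn -{1}zE -exprM mulnC exprM ZE.
apply: contraNT (Z2) => /(class_period_common_prime b2 bnuk) [r r_pr /andP [rk rm]].
have rE : (r %| #|E|.-1)%N.
  rewrite card_ext_pred; apply: dvdn_trans rm _; rewrite /m /half_order.
  by case: (a == b); rewrite -!muln2; [apply: dvdn_mulr | apply: dvdn_mull];
    apply: dvdn_mulr.
have [w wr w1] := exists_root_of_unity rE (prime_gt1 r_pr).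
have wm : w ^+ m = 1 by rewrite /m; case/dvdnP: rm => j ->; rewrite mulnC exprM wr expr1n.
have wk : w ^+ k = 1 by case/dvdnP: rk => j ->; rewrite mulnC exprM wr expr1n.
have fib j : z * w ^+ j = z \/ z * w ^+ j = z^-1.
  have xk : (z * w ^+ j) ^+ k = z ^+ k by rewrite exprMn exprAC wk expr1n mulr1.
  apply: (chebF_fibre a2 b2 Tinj u0A jz _ _ xk).
    by apply: contra_neq Z2 => x2; rewrite -xk -exprM mulnC exprM x2 expr1n.
  by rewrite exprMn exprAC wm expr1n mulr1.
by apply/eqP/(sqr_expr_of_fibre oppr1_neq1E jz.1 wk w1 (fib 1%N) (fib 2%N)).
Qed.

Lemma chebF_half_order_dvd split k u : (half_order split %| k)%N ->
  chebF k u \in [set 1; -1] \/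
  exists2 b, b ^+ 2 = 1 &
    chebF k u \in char_class ((if split then -1 else 1) * b) b /\ (~~ odd k -> b = nu).
Proof.
move=> mk; have [z jz] := joukowski_exists u; have jZ := chebF_joukowski k jz.
have pm1 : (z ^+ k) ^+ 2 = 1 -> chebF k u \in [set 1; -1].
  by move/(joukowski_pm1 jZ) => [] ->; rewrite !inE eqxx ?orbT.
have [split' zE] := joukowski_torus jz.
have ZE : (z ^+ k) ^+ (half_order split').*2 = 1 by rewrite exprAC zE expr1n.
have [Z2|Z2] := eqVneq ((z ^+ k) ^+ 2) 1; first by left; apply: pm1.
have [splitE|split'E] := eqVneq split' split.
  case/negP: Z2; case/dvdnP: mk => j kE; rewrite kE -splitE.
  by rewrite -exprM -mulnA muln2 mulnC exprM zE expr1n.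
right; have [b b2 [TA bE]] := joukowski_char_class jZ Z2 ZE.
have split'N : split' = ~~ split by move: split'E; case: (split) (split') => [] [].
exists b => //; split; first by move: TA; rewrite split'N; case: (split).
rewrite -dvdn2 => /dvdnP [j kE]; apply: (mulIf (sign_neq0 nu_sqr)); rewrite -expr2 nu_sqr.
by apply: (fmorph_inj f); rewrite bE kE -exprM mulnAC -mulnA muln2 mulnC exprM zE expr1n rmorph1.
Qed.

End QuadraticExtension.

Lemma chebF_char_class_trivial_sign a b split k u :
    a ^+ 2 = 1 -> b ^+ 2 = 1 -> (a == b) = split -> (b * nu) ^+ k = 1 ->
    u \in char_class a b ->
  chebF k u \in char_class (if split then nu else - nu) nu
                 :|: [set 1; if split then - eps else eps].
Proof.
move=> a2 b2 splitE bnuk uA; have [E [f cardE]] := quadratic_extension.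
have a'2 : (if split then nu else - nu) ^+ 2 = 1 by case: (split); rewrite ?sqrrN nu_sqr.
have classE : ((if split then nu else - nu) == nu) = (a == b).
  by rewrite splitE; case: (split); rewrite ?eqxx // (negbTE (oppr_neq_self (sign_neq0 nu_sqr))).
have nuE : nu * nu = (b * nu) ^+ k by rewrite bnuk -expr2 nu_sqr.
case: (chebF_char_class f cardE a2 b2 a'2 nu_sqr classE nuE uA) => [TA | [-> _] | [-> epsE]];
  rewrite in_setU ?TA //; apply/orP; right; rewrite !inE ?eqxx //.
move: epsE; rewrite -expr2 nu_sqr splitE /half_order; case: (split) => [<-|].
  by rewrite eqxx orbT.
by rewrite exprS mulN1r => /eqP; rewrite eq_sym eqr_oppLR => /eqP ->; rewrite eqxx orbT.
Qed.

Lemma chebF_char_class_nu k :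
  (forall u, u \in char_class nu nu -> chebF k u \in char_class nu nu :|: [set 1; - eps]) /\
  (forall u, u \in char_class (- nu) nu -> chebF k u \in char_class (- nu) nu :|: [set 1; eps]).
Proof.
have nunuk : (nu * nu) ^+ k = 1 by rewrite -expr2 nu_sqr expr1n.
have nuN : (- nu == nu) = false by rewrite (negbTE (oppr_neq_self (sign_neq0 nu_sqr))).
split=> u uA.
  exact: (chebF_char_class_trivial_sign (split := true) nu_sqr nu_sqr (eqxx _) nunuk uA).
have nuN2 : (- nu) ^+ 2 = 1 by rewrite sqrrN nu_sqr.
exact: (chebF_char_class_trivial_sign (split := false) nuN2 nu_sqr nuN nunuk uA).
Qed.

Lemma chebF_char_class_even k : ~~ odd k ->
  (forall u, u \in char_class (- nu) (- nu) -> chebF k u \in char_class nu nu :|: [set 1; - eps]) /\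
  (forall u, u \in char_class nu (- nu) -> chebF k u \in char_class (- nu) nu :|: [set 1; eps]).
Proof.
move=> k_even; have nuN2 : (- nu) ^+ 2 = 1 by rewrite sqrrN nu_sqr.
have nuk : (- nu * nu) ^+ k = 1 by rewrite mulNr -expr2 nu_sqr -signr_odd (negbTE k_even).
have nuN : (nu == - nu) = false by rewrite eq_sym (negbTE (oppr_neq_self (sign_neq0 nu_sqr))).
split=> u uA.
  exact: (chebF_char_class_trivial_sign (split := true) nuN2 nuN2 (eqxx _) nuk uA).
exact: (chebF_char_class_trivial_sign (split := false) nu_sqr nuN2 nuN nuk uA).
Qed.

Lemma chebF_char_class_odd k : odd k ->
  (forall u, u \in char_class (eps * nu) (- nu) ->
     chebF k u \in char_class (eps * nu) (- nu) :|: [set -1]) /\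
  (forall u, u \in char_class (- (eps * nu)) (- nu) ->
     chebF k u \in char_class (- (eps * nu)) (- nu)).
Proof.
move=> k_odd; have [E [f cardE]] := quadratic_extension.
have bnu : - nu * nu = -1 by rewrite mulNr -expr2 nu_sqr.
have bnuk : - nu * nu = (- nu * nu) ^+ k by rewrite bnu -signr_odd k_odd.
have a2 : (eps * nu) ^+ 2 = 1 by rewrite exprMn eps_sqr nu_sqr mulr1.
have aN2 : (- (eps * nu)) ^+ 2 = 1 by rewrite sqrrN.
have b2 : (- nu) ^+ 2 = 1 by rewrite sqrrN nu_sqr.
have n1 : (-1 : F) == 1 = false := negbTE oppr1_neq1.
split=> u uA.
  case: (chebF_char_class f cardE a2 b2 a2 b2 (erefl _) bnuk uA) => [TA|[_ bnu1]|[-> _]].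
  - by rewrite in_setU TA.
  - by move: bnu1; rewrite bnu => /eqP; rewrite n1.
  - by rewrite in_setU !inE eqxx orbT.
case: (chebF_char_class f cardE aN2 b2 aN2 b2 (erefl _) bnuk uA) => [//|[_ bnu1]|[_ bnuE]].
  by move: bnu1; rewrite bnu => /eqP; rewrite n1.
move: bnuE; rewrite bnu eqr_opp; have [e1|eN1] := sqr_sign eps_sqr.
  by rewrite e1 mul1r eqxx /half_order /= e1 => /eqP; rewrite n1.
rewrite eN1 mulN1r (negbTE (oppr_neq_self (sign_neq0 nu_sqr))) /half_order exprS eN1 mulN1r opprK.
by move/eqP; rewrite n1.
Qed.

Lemma chebF_half_dvd k : (h %| k)%N ->
  (forall u, chebF k u \in char_class 1 (-1) :|: char_class (-1) 1 :|: [set 1; -1]) /\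
  (~~ odd k -> forall u, chebF k u \in char_class (- nu) nu :|: [set 1; -1]).
Proof.
move=> hk; have [E [f cardE]] := quadratic_extension.
split=> [|k_even] u; case: (chebF_half_order_dvd f cardE (split := true) u hk)
  => [pm1|[b b2 [TA bE]]]; rewrite in_setU ?pm1 ?orbT // !in_setU.
  by case: (sqr_sign b2) TA => ->; rewrite ?mulrNN mulr1 => ->; rewrite ?orbT.
by move: TA; rewrite (bE k_even) mulN1r => ->.
Qed.

Lemma chebF_half_succ_dvd k : (h.+1 %| k)%N ->
  (forall u, chebF k u \in char_class 1 1 :|: char_class (-1) (-1) :|: [set 1; -1]) /\
  (~~ odd k -> forall u, chebF k u \in char_class nu nu :|: [set 1; -1]).
Proof.
move=> hk; have [E [f cardE]] := quadratic_extension.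
split=> [|k_even] u; case: (chebF_half_order_dvd f cardE (split := false) u hk)
  => [pm1|[b b2 [TA bE]]]; rewrite in_setU ?pm1 ?orbT // !in_setU.
  by case: (sqr_sign b2) TA => ->; rewrite mul1r => ->; rewrite ?orbT.
by move: TA; rewrite (bE k_even) mul1r => ->.
Qed.

Lemma chebF_permutes_char_class a b k : a ^+ 2 = 1 -> b ^+ 2 = 1 -> (0 < k)%N ->
    char_class a b != set0 ->
  permutes (chebF k) (char_class a b) <-> coprime k (class_period a b).
Proof.
move=> a2 b2 k_gt0 nonempty; have [E [f cardE]] := quadratic_extension.
split=> [Tperm|]; first exact: (coprime_of_chebF_permutes f cardE a2 b2 nonempty Tperm).
move=> kd; split; first exact: (chebF_char_class_coprime f cardE).
exact: (chebF_inj_coprime f cardE).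
Qed.

Lemma dsign_class_period (e1 e2 : int) : e1 ^+ 2 = 1 -> e2 ^+ 2 = 1 ->
  dsign q (legendre (2 : F) * e1) (legendre (2 : F) * e2) = class_period e1%:~R e2%:~R.
Proof.
have n1 := negbTE oppr1_neq1; have n1' : ((1 : F) == -1) = false by rewrite eq_sym n1.
rewrite /dsign /class_period /half_order -legendreE card_predE card_succE !doubleK.
have /eqP := legendre_sqr two_neq0F; rewrite sqrf_eq1 => /orP [] /eqP ->;
move=> /eqP; rewrite sqrf_eq1 => /orP [] /eqP -> /eqP; rewrite sqrf_eq1 => /orP [] /eqP ->;
  by rewrite /= ?rmorphN ?rmorph1 ?mulr1 ?mulrN1 ?opprK ?eqxx ?n1 ?n1'.
Qed.

End OddField.

Theorem theorem9p1 (F : finFieldType) (hodd : odd #|F|) (k : nat) (hk : (1 <= k)%N) :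
  let q := #|F| in
  let eps := legendre (-1 : F) in
  let nu := legendre (2 : F) in
  let T := chebF (F:=F) k in
  let A := fun e1 e2 : int => Aset e1 e2 (1 : F) in
  (cheb k).[1] = 1 /\ (cheb k).[-1] = (-1) ^+ k /\
  (* (i) *)
    ((forall u, u \in A nu nu -> T u \in A nu nu :|: [set 1; (- eps)%:~R])
    /\ (forall u, u \in A (- nu) nu -> T u \in A (- nu) nu :|: [set 1; eps%:~R])) /\
  (* (ii) *)
    (odd k ->
      (forall u, u \in A (eps * nu) (- nu) -> T u \in A (eps * nu) (- nu) :|: [set -1])
      /\ (forall u, u \in A (- (eps * nu)) (- nu) -> T u \in A (- (eps * nu)) (- nu))) /\
  (* (iii) *)
    (~~ odd k ->
      (forall u, u \in A (- nu) (- nu) -> T u \in A nu nu :|: [set 1; (- eps)%:~R])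
      /\ (forall u, u \in A nu (- nu) -> T u \in A (- nu) nu :|: [set 1; eps%:~R])) /\
  (* (iv) *)
    (((q.-1)./2 %| k)%N ->
      (forall u : F, T u \in A 1 (-1) :|: A (-1) 1 :|: [set 1; -1])
      /\ A 1 (-1) :|: A (-1) 1 = [set a : F | ~~ is_square (a ^+ 2 - 1)]
      /\ (~~ odd k -> forall u : F, T u \in A (- nu) nu :|: [set 1; -1])) /\
  (* (v) *)
    (((q.+1)./2 %| k)%N ->
      (forall u : F, T u \in A 1 1 :|: A (-1) (-1) :|: [set 1; -1])
      /\ A 1 1 :|: A (-1) (-1) :|: [set 1; -1] = [set a : F | is_square (a ^+ 2 - 1)]
      /\ (~~ odd k -> forall u : F, T u \in A nu nu :|: [set 1; -1])) /\
  (* (vi) *)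
    (forall e1 e2 : int, e1 \in [:: 1; -1] -> e2 \in [:: 1; -1] ->
      A e1 e2 != set0 ->
      (permutes T (A e1 e2) <-> gcdn k (dsign q (nu * e1) (nu * e2)) = 1%N)).
Proof.
move=> q eps nu T A.
have nu2 : nu ^+ 2 = 1 := legendre_sqr (two_neq0 hodd).
have eps2 : eps ^+ 2 = 1 by rewrite legendre_sqr // oppr_eq0 oner_eq0.
have AE e1 e2 : e1 ^+ 2 = 1 -> e2 ^+ 2 = 1 -> A e1 e2 = char_class e1%:~R e2%:~R.
  exact: Aset_char_class.
have nuE : nu%:~R = (2 : F) ^+ #|F|./2 := legendreE hodd 2.
have epsE : eps%:~R = (-1 : F) ^+ #|F|./2 := legendreE hodd (-1).
have [T1 TN1] := cheb_pm1 k.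
do 2!split=> //.
split; first by rewrite !AE ?sqrrN // !rmorphN /= nuE epsE; exact: chebF_char_class_nu.
split.
  rewrite !AE ?sqrrN ?exprMn ?eps2 ?nu2 ?mulr1 // !rmorphN !rmorphM /= nuE epsE.
  exact: chebF_char_class_odd.
split; first by rewrite !AE ?sqrrN // !rmorphN /= nuE epsE; exact: chebF_char_class_even.
split.
  rewrite card_predE // doubleK => hdvd; rewrite !AE ?sqrrN ?expr1n // !rmorphN rmorph1 /= nuE.
  have [Tcls Teven] := chebF_half_dvd hodd hdvd.
  by do !split => //; exact: char_class_nonsquare.
split.
  rewrite card_succE // doubleK => hdvd; rewrite !AE ?sqrrN ?expr1n // !rmorphN rmorph1 /= nuE.
  have [Tcls Teven] := chebF_half_succ_dvd hodd hdvd.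
  by do !split => //; exact: char_class_square.
have sign_sqr (e : int) : e \in [:: 1; -1] -> e ^+ 2 = 1 by rewrite !inE => /orP [] /eqP ->.
move=> e1 e2 /sign_sqr e1s /sign_sqr e2s; rewrite AE // dsign_class_period // => nonempty.
have intr_sqr (e : int) : e ^+ 2 = 1 -> (e%:~R : F) ^+ 2 = 1.
  by move=> es; rewrite -rmorphXn es rmorph1.
have := chebF_permutes_char_class hodd (intr_sqr _ e1s) (intr_sqr _ e2s) hk nonempty.
by rewrite /coprime => ->; split=> /eqP.
Qed.
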